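(* For $i=1,\dots,m$ let $n_i\in\mathbb N$ and let $f_i:\mathbb{R}^{n_i}\to(-\infty,+\infty]$ be lower semicontinuous and variationally convex at $\bar x_i$ for $\bar v_i\in\partial f_i(\bar x_i)$. Then the separable sum $f:=f_1\oplus\cdots\oplus f_m$, $f(x_1,\dots,x_m)=\sum_{i=1}^mf_i(x_i)$, is variationally convex at $\bar x:=(\bar x_1,\dots,\bar x_m)$ for $\bar v:=(\bar v_1,\dots,\bar v_m)\in\partial f(\bar x)$.
   Context: $\partial$ is the limiting (Mordukhovich) subdifferential. A lsc $h$ is variationally convex at $\bar x$ for $\bar v\in\partial h(\bar x)$ if for some convex neighborhood $U\times V$ of $(\bar x,\bar v)$ there are a lsc convex function $\varphi\le h$ on $U$ and $\varepsilon>0$ such that $[U_\varepsilon\times V]\cap\operatorname{gph}\partial h=[U\times V]\cap\operatorname{gph}\partial\varphi$ and $h(x)=\varphi(x)$ at the common elements $(x,v)$, where $U_\varepsilon=\{x\in U:h(x)<h(\bar x)+\varepsilon\}$. *)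

From HB Require Import structures.
From mathcomp Require Import all_boot all_order all_algebra.
From mathcomp Require Import reals constructive_ereal.

Set Implicit Arguments.
Unset Strict Implicit.
Unset Printing Implicit Defensive.

Import Order.TTheory GRing.Theory Num.Theory.
Local Open Scope ring_scope.

(* R^I, for a finite index type I, with its Euclidean structure.
   R^n is ('I_n -> R). *)
Section VarConv.
Variables (R : realType) (I : finType).

Definition ip (x y : I -> R) : R := \sum_(j : I) x j * y j.
Definition enorm (x : I -> R) : R := Num.sqrt (ip x x).
Definition vsub (x y : I -> R) : I -> R := fun j => x j - y j.
Definition vcomb (t : R) (x y : I -> R) : I -> R :=
  fun j => t * x j + (1 - t) * y j.

Definition is_nbhd (U : (I -> R) -> Prop) (x : I -> R) : Prop :=
  exists2 r : R, 0 < r & forall y, enorm (vsub y x) < r -> U y.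

Definition convex_set (U : (I -> R) -> Prop) : Prop :=
  forall x y (t : R), U x -> U y -> 0 <= t <= 1 -> U (vcomb t x y).

Definition proper_valued (h : (I -> R) -> \bar R) : Prop :=
  forall x, h x != -oo%E.

Definition lsc (h : (I -> R) -> \bar R) : Prop :=
  forall x (c : R), (c%:E < h x)%E ->
    exists2 d : R, 0 < d & forall y, enorm (vsub y x) < d -> (c%:E < h y)%E.

Definition convex_fun (h : (I -> R) -> \bar R) : Prop :=
  forall x y (t : R), 0 < t < 1 ->
    (h (vcomb t x y) <= t%:E * h x + (1 - t)%:E * h y)%E.

Definition reg_subdiff (h : (I -> R) -> \bar R) (x v : I -> R) : Prop :=
  h x \is a fin_num /\
  forall eps : R, 0 < eps -> exists2 d : R, 0 < d &
    forall y, enorm (vsub y x) < d ->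
      (h x + (ip v (vsub y x) - eps * enorm (vsub y x))%:E <= h y)%E.

Definition seq_cvg (u : nat -> I -> R) (l : I -> R) : Prop :=
  forall e : R, 0 < e -> exists N, forall k, (N <= k)%N -> enorm (vsub (u k) l) < e.

Definition lim_subdiff (h : (I -> R) -> \bar R) (x v : I -> R) : Prop :=
  h x \is a fin_num /\
  exists xk vk : nat -> I -> R,
    [/\ seq_cvg xk x,
        (forall e : R, 0 < e -> exists N, forall k, (N <= k)%N ->
            (`|h (xk k) - h x| < e%:E)%E),
        (forall k, reg_subdiff h (xk k) (vk k)) &
        seq_cvg vk v].

Definition var_convex (h : (I -> R) -> \bar R) (xb vb : I -> R) : Prop :=
  lsc h /\ lim_subdiff h xb vb /\
  exists (U V : (I -> R) -> Prop) (phi : (I -> R) -> \bar R),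
  exists2 eps : R, 0 < eps &
    [/\ (convex_set U /\ is_nbhd U xb /\ convex_set V /\ is_nbhd V vb),
        (proper_valued phi /\ lsc phi /\ convex_fun phi),
        (forall x, U x -> (phi x <= h x)%E),
        (forall x v,
            (U x /\ (h x < h xb + eps%:E)%E) /\ V v /\ lim_subdiff h x v
            <-> U x /\ V v /\ lim_subdiff phi x v) &
        (forall x v, U x -> (h x < h xb + eps%:E)%E -> V v ->
            lim_subdiff h x v -> h x = phi x)].

End VarConv.

(* R^{n_1} x ... x R^{n_m} is identified with R^{ {i : 'I_m & 'I_(n i)} } *)
Definition sep_join (R : realType) (m : nat) (n : 'I_m -> nat)
  (x : forall i : 'I_m, 'I_(n i) -> R) : {i : 'I_m & 'I_(n i)} -> R :=
  fun p => x (tag p) (tagged p).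

Definition sep_sum (R : realType) (m : nat) (n : 'I_m -> nat)
  (f : forall i : 'I_m, ('I_(n i) -> R) -> \bar R)
  (x : {i : 'I_m & 'I_(n i)} -> R) : \bar R :=
  (\sum_(i < m) f i (fun j => x (Tagged (fun i => 'I_(n i)) j)))%E.

(* Everything decomposes block by block.  A regular subgradient of the separable
   sum is exactly a tuple of regular subgradients of the summands (perturb one
   block at a time), and since each f_i is lsc, f(x^k) -> f(x) forces
   f_i(x_i^k) -> f_i(x_i): no block can drop below its limit, so none can exceed
   it.  Hence the limiting subdifferential of f is the product of those of the
   f_i.  Take phi := (+)_i phi_i and small boxes around xb and vb.  The only
   non-blockwise ingredient is the f-attentive level f(x) < f(xb) + eps: near xb
   every f_i(x_i) is almost above f_i(xb_i) by lower semicontinuity, and on the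
   graph of the subdifferential of the convex phi_i, where phi_i(x_i) + <v_i,
   xb_i - x_i> <= phi_i(xb_i), every phi_i(x_i) is almost below phi_i(xb_i);
   so for a small enough level the global and the blockwise level conditions
   agree on the graphs. *)

From Stdlib Require Import FunctionalExtensionality ClassicalEpsilon ChoiceFacts.
From HB Require Import structures.
From mathcomp Require Import all_boot all_order all_algebra.
From mathcomp Require Import reals constructive_ereal ring lra.

Set Implicit Arguments.
Unset Strict Implicit.
Unset Printing Implicit Defensive.

Import Order.TTheory GRing.Theory Num.Theory.
Local Open Scope ring_scope.

Lemma fun_choice (A : Type) (B : A -> Type) (P : forall a, B a -> Prop) :
  (forall a, exists b, P a b) -> exists g : forall a, B a, forall a, P a (g a).
Proof. exact: (non_dep_dep_functional_choice choice B P). Qed.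

Lemma fun_choice2 (A : Type) (B : A -> Type) (P Q : forall a, B a -> Prop) :
  (forall a, exists2 b, P a b & Q a b) ->
  exists2 g : forall a, B a, (forall a, P a (g a)) & (forall a, Q a (g a)).
Proof.
move=> PQ; have [g gPQ] := @fun_choice A B (fun a b => P a b /\ Q a b)
  (fun a => let: ex_intro2 b Pb Qb := PQ a in ex_intro _ b (conj Pb Qb)).
by exists g => a; case: (gPQ a).
Qed.

Section Euclid.
Variables (R : realType) (I : finType).
Implicit Types (x y a b c : I -> R).

Lemma ip_ge0 x : 0 <= ip x x.
Proof. by apply: sumr_ge0 => j _; rewrite -expr2 sqr_ge0. Qed.

Lemma abs_le_enorm x j : `|x j| <= enorm x.
Proof.
rewrite -sqrtr_sqr /enorm ler_sqrt ?ip_ge0 // expr2 /ip (bigD1 j) //= lerDl.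
by apply: sumr_ge0 => k _; rewrite -expr2 sqr_ge0.
Qed.

Lemma enorm_le_sum_abs x : enorm x <= \sum_j `|x j|.
Proof.
have sum_ge0 : 0 <= \sum_j `|x j| by apply: sumr_ge0.
rewrite -(ger0_norm sum_ge0) -sqrtr_sqr /enorm ler_sqrt ?sqr_ge0 //.
rewrite expr2 mulr_suml /ip; apply: ler_sum => j _.
apply: le_trans (_ : `|x j| * `|x j| <= _); first by rewrite -normrM ler_norm.
by apply: ler_wpM2l => //; rewrite (bigD1 j) //= lerDl; apply: sumr_ge0.
Qed.

Lemma ip_vsubxx a c : ip a (vsub c c) = 0.
Proof. by rewrite /ip big1 // => j _; rewrite /vsub subrr mulr0. Qed.

Lemma enorm_vsubxx c : enorm (vsub c c) = 0.
Proof. by rewrite /enorm ip_vsubxx sqrtr0. Qed.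

Lemma abs_lt_enorm x s j : enorm x < s -> `|x j| < s.
Proof. exact: le_lt_trans (abs_le_enorm x j). Qed.

Lemma ip_le_card a b (A B : R) :
  (forall j, `|a j| <= A) -> (forall j, `|b j| <= B) ->
  `|ip a b| <= #|I|%:R * (A * B).
Proof.
move=> aA bB; apply: le_trans (ler_norm_sum _ _ _) _.
rewrite mulr_natl -sumr_const; apply: ler_sum => j _; rewrite normrM.
by apply: ler_pM => //; apply: le_trans (aA j).
Qed.

Lemma ip_continuous a b e : 0 < e -> exists2 d : R, 0 < d & forall a' b',
  (forall j, `|a' j - a j| < d) -> (forall j, `|b' j - b j| < d) ->
  `|ip a' b' - ip a b| < e.
Proof.
move=> e_gt0; set C : R := #|I|%:R; set K := enorm a + enorm b + 1.
have C_ge0 : 0 <= C by rewrite ler0n.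
have K_gt0 : 0 < K by rewrite /K ltr_wpDl ?addr_ge0 ?sqrtr_ge0.
have CK_gt0 : 0 < (C + 1) * K by rewrite mulr_gt0 // ltr_wpDl.
exists (Num.min 1 (e / ((C + 1) * K))) => [|a' b' a'a b'b].
  by rewrite lt_min ltr01 divr_gt0.
set d := Num.min _ _ in a'a b'b.
have d_le1 : d <= 1 by rewrite ge_min lexx.
have dCK_le : d * ((C + 1) * K) <= e by rewrite -ler_pdivlMr // ge_min lexx orbT.
have -> : ip a' b' - ip a b = ip (vsub a' a) b' + ip a (vsub b' b).
  by rewrite /ip -sumrB -big_split; apply: eq_bigr => j _; rewrite /vsub /=; ring.
have b'_bd j : `|b' j| <= enorm b + 1.
  have := ler_normD (b' j - b j) (b j); rewrite subrK.
  by have := abs_le_enorm b j; have := b'b j; lra.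
have bd1 := ip_le_card (fun j => ltW (a'a j)) b'_bd.
have bd2 := ip_le_card (abs_le_enorm a) (fun j => ltW (b'b j)).
apply: le_lt_trans (ler_normD _ _) _.
have dK_gt0 : 0 < d * K by rewrite mulr_gt0 // lt_min ltr01 divr_gt0.
rewrite /K in dK_gt0 dCK_le; nra.
Qed.

Lemma ip_vsub_vcomb t x y v :
  ip v (vsub (vcomb t y x) x) = t * ip v (vsub y x).
Proof. by rewrite /ip mulr_sumr; apply: eq_bigr => j _; rewrite /vsub /vcomb; ring. Qed.

Lemma enorm_vsub_vcomb t x y : 0 <= t ->
  enorm (vsub (vcomb t y x) x) = t * enorm (vsub y x).
Proof.
move=> t_ge0; rewrite /enorm.
have -> : ip (vsub (vcomb t y x) x) (vsub (vcomb t y x) x) =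
          t ^+ 2 * ip (vsub y x) (vsub y x).
  by rewrite /ip mulr_sumr; apply: eq_bigr => j _; rewrite /vsub /vcomb; ring.
by rewrite sqrtrM ?sqr_ge0 // sqrtr_sqr ger0_norm.
Qed.

Definition box c (s : R) : (I -> R) -> Prop := fun x => forall j, `|x j - c j| < s.

Lemma box_convex c s : convex_set (box c s).
Proof.
move=> x y t xc yc /andP[t_ge0 t_le1] j; rewrite /vcomb.
have -> : t * x j + (1 - t) * y j - c j = t * (x j - c j) + (1 - t) * (y j - c j).
  by ring.
apply: le_lt_trans (ler_normD _ _) _.
have t1_ge0 : 0 <= 1 - t by rewrite subr_ge0.
rewrite !normrM (ger0_norm t_ge0) (ger0_norm t1_ge0).
have := ler_wpM2l t1_ge0 (ltW (yc j)).
move: t_ge0; rewrite le0r => /orP[/eqP-> | t_gt0]; first by have := yc j; lra.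
have : t * `|x j - c j| < t * s by rewrite ltr_pM2l.
lra.
Qed.

Lemma box_nbhd c s : 0 < s -> is_nbhd (box c s) c.
Proof. by move=> s_gt0; exists s => // y ys j; exact: abs_lt_enorm j ys. Qed.

Lemma box_enorm c s x : box c s x -> enorm (vsub x c) <= #|I|%:R * s.
Proof.
move=> xc; apply: le_trans (enorm_le_sum_abs _) _.
by rewrite mulr_natl -sumr_const; apply: ler_sum => j _; exact: ltW (xc j).
Qed.

Lemma box_center c s : 0 < s -> box c s c.
Proof. by move=> s_gt0 j; rewrite subrr normr0. Qed.

Lemma nbhd_center (U : (I -> R) -> Prop) c : is_nbhd U c -> U c.
Proof. by case=> r r_gt0 Ur; apply: Ur; rewrite enorm_vsubxx. Qed.

End Euclid.

Section ConvexSubgradient.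
Variables (R : realType) (I : finType) (phi : (I -> R) -> \bar R).
Hypotheses (phi_proper : proper_valued phi) (phi_convex : convex_fun phi).

Lemma convex_reg_subgradient x v : reg_subdiff phi x v ->
  forall y, (phi x + (ip v (vsub y x))%:E <= phi y)%E.
Proof.
move=> [phix_fin phi_reg] y.
case phiyE : (phi y) => [b| |]; [|by rewrite leey|by move: (phi_proper y); rewrite phiyE].
rewrite -(fineK phix_fin) -EFinD lee_fin.
set a := fine (phi x); set c := ip v (vsub y x); set D := enorm (vsub y x).
have D_ge0 : 0 <= D by apply: sqrtr_ge0.
(* Compare the regular subgradient inequality at [x + t (y - x)], for small [t],
   with convexity along the segment [[x, y]]. *)
have approx (eps : R) : 0 < eps -> a + c - eps * D <= b.
  move=> eps_gt0; have [d d_gt0 phi_d] := phi_reg eps eps_gt0.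
  set t := Num.min (1 / 2) (d / (D + 1)).
  have t_gt0 : 0 < t by rewrite lt_min !divr_gt0 ?ltr_wpDl.
  have t_lt1 : t < 1 by rewrite gt_min; apply/orP; left; lra.
  have tD_lt_d : t * D < d.
    have : t * (D + 1) <= d by rewrite -ler_pdivlMr ?ltr_wpDl // ge_min lexx orbT.
    nra.
  have lower := phi_d (vcomb t y x).
  rewrite ip_vsub_vcomb (enorm_vsub_vcomb _ _ (ltW t_gt0)) -/c -/D in lower.
  have upper := phi_convex y x (t := t); rewrite t_gt0 t_lt1 phiyE in upper.
  have := le_trans (lower tD_lt_d) (upper isT).
  rewrite -(fineK phix_fin) -/a -EFinD -!EFinM -EFinD lee_fin => ineq.
  have : t * (a + c - eps * D - b) <= 0 by nra.
  by rewrite pmulr_rle0 // subr_le0.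
apply/ler_addgt0Pr => e e_gt0.
have eD_le : e / (D + 1) * D <= e by rewrite mulrAC ler_pdivrMr ?ltr_wpDl //; nra.
have := approx _ (divr_gt0 e_gt0 (ltr_wpDl D_ge0 ltr01)); lra.
Qed.

Lemma convex_lim_subgradient x v : lim_subdiff phi x v ->
  forall y, (phi x + (ip v (vsub y x))%:E <= phi y)%E.
Proof.
move=> [phix_fin [xk [vk [xk_cvg phixk_cvg vk_reg vk_cvg]]]] y.
case phiyE : (phi y) => [b| |]; [|by rewrite leey|by move: (phi_proper y); rewrite phiyE].
rewrite -(fineK phix_fin) -EFinD lee_fin.
apply/ler_addgt0Pr => e e_gt0.
have e2_gt0 : 0 < e / 2 by rewrite divr_gt0.
have [d d_gt0 ip_d] := ip_continuous v (vsub y x) e2_gt0.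
have [N1 xkN] := xk_cvg d d_gt0.
have [N2 vkN] := vk_cvg d d_gt0.
have [N3 phiN] := phixk_cvg _ e2_gt0.
set k := maxn N1 (maxn N2 N3).
have /and3P[k1 k2 k3] : [&& N1 <= k, N2 <= k & N3 <= k]%N.
  by rewrite !leq_max !leqnn /= !orbT.
have phixk_fin : phi (xk k) \is a fin_num by case: (vk_reg k).
have phi_near := phiN k k3.
rewrite -(fineK phix_fin) -(fineK phixk_fin) -EFinB lte_fin ltr_norml in phi_near.
case/andP: phi_near => phi_lo _.
have subgrad := convex_reg_subgradient (vk_reg k) y.
rewrite phiyE -(fineK phixk_fin) -EFinD lee_fin in subgrad.
have xk_near := xkN k k1; have vk_near := vkN k k2.
have ip_close :
    `|ip (vk k) (vsub y (xk k)) - ip v (vsub y x)| < e / 2.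
  apply: ip_d => j; first exact: abs_lt_enorm j vk_near.
  have -> : vsub y (xk k) j - vsub y x j = - vsub (xk k) x j by rewrite /vsub; ring.
  by rewrite normrN; apply: abs_lt_enorm j xk_near.
rewrite ltr_norml in ip_close; case/andP: ip_close => ip_lo _.
lra.
Qed.

Lemma convex_lim_subdiff_lt xb vb e : phi xb \is a fin_num -> 0 < e ->
  exists2 s : R, 0 < s & forall x v,
    enorm (vsub x xb) < s -> enorm (vsub v vb) < s -> lim_subdiff phi x v ->
    (phi x < phi xb + e%:E)%E.
Proof.
move=> phixb_fin e_gt0; have [s s_gt0 ip_s] := ip_continuous vb (vsub xb xb) e_gt0.
exists s => // x v x_near v_near phi_xv.
have phix_fin : phi x \is a fin_num by case: phi_xv.
have := convex_lim_subgradient phi_xv xb.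
rewrite -(fineK phix_fin) -(fineK phixb_fin) -EFinD !lee_fin lte_fin.
have ip_small : `|ip v (vsub xb x) - ip vb (vsub xb xb)| < e.
  apply: ip_s => j; first exact: abs_lt_enorm j v_near.
  have -> : vsub xb x j - vsub xb xb j = - vsub x xb j by rewrite /vsub; ring.
  by rewrite normrN; apply: abs_lt_enorm j x_near.
rewrite ip_vsubxx subr0 ltr_norml in ip_small; case/andP: ip_small; lra.
Qed.

End ConvexSubgradient.

Lemma eventually_forall (I : finType) (P : I -> nat -> Prop) :
  (forall i, exists N, forall k, (N <= k)%N -> P i k) ->
  exists N, forall k, (N <= k)%N -> forall i, P i k.
Proof.
move=> /fun_choice[N PN]; exists (\max_i N i)%N => k k_ge i.
by apply: PN; apply: leq_trans k_ge; apply: leq_bigmax.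
Qed.

Lemma pos_lower_bound (R : realDomainType) (I : finType) (D : I -> R) :
  (forall i, 0 < D i) -> exists2 d : R, 0 < d & forall i, d <= D i.
Proof.
move=> D_gt0; exists (\big[Num.min/1]_i D i).
  by elim/big_ind: _ => // a b a_gt0 b_gt0; rewrite lt_min a_gt0.
by move=> i; rewrite (bigD1 i) //= ge_min lexx.
Qed.

Lemma ltr_sum_block (R : realDomainType) (I : finType) (a b : I -> R) (c d : R) i :
  0 <= d -> (forall j, b j - d < a j) -> \sum_j a j < \sum_j b j + c ->
  a i < b i + c + #|I|%:R * d.
Proof.
move=> d_ge0 ab sum_lt.
have others : \sum_(j | j != i) (b j - d) <= \sum_(j | j != i) a j.
  by apply: ler_sum => j _; apply: ltW.
have d_sum : \sum_(j | j != i) d <= #|I|%:R * d.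
  by rewrite mulr_natl -sumr_const [leRHS](bigD1 i) //= lerDr.
rewrite sumrB in others.
rewrite (bigD1 i) //= [\sum_j b j](bigD1 i) //= in sum_lt.
lra.
Qed.

Section ExtendedSequences.
Variable R : realType.

Definition ecvg (u : nat -> \bar R) (l : \bar R) : Prop :=
  forall e : R, 0 < e -> exists N, forall k, (N <= k)%N -> (`|u k - l| < e%:E)%E.

Lemma abse_lt_fin (u w : \bar R) (e : R) : w \is a fin_num ->
  (`|u - w| < e%:E)%E -> u \is a fin_num /\ `|fine u - fine w| < e.
Proof. by case: w => // w _; case: u => // u; rewrite -EFinB lte_fin. Qed.

Variable I : finType.
Implicit Types (u : I -> nat -> \bar R) (l : I -> \bar R).

Lemma ecvg_sum u l : (forall i, l i \is a fin_num) -> (forall i, ecvg (u i) (l i)) ->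
  ecvg (fun k => \sum_i u i k)%E (\sum_i l i)%E.
Proof.
move=> l_fin u_cvg e e_gt0; set C : R := #|I|%:R.
have e'_gt0 : 0 < e / (C + 1) by rewrite divr_gt0 // ltr_wpDl ?ler0n.
have [N uN] := eventually_forall (fun i => u_cvg i _ e'_gt0).
exists N => k k_ge; have close i := abse_lt_fin (l_fin i) (uN k k_ge i).
rewrite -(EFin_sum_fine _ (fun i _ => (close i).1)) -EFin_sum_fine //.
rewrite -EFinB -sumrB lte_fin; apply: le_lt_trans (ler_norm_sum _ _ _) _.
apply: le_lt_trans (_ : \sum_(i : I) (e / (C + 1)) < e).
  by apply: ler_sum => i _; apply: ltW; exact: (close i).2.
rewrite sumr_const -mulr_natl -/C mulrA ltr_pdivrMr ?ltr_wpDl ?ler0n //.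
by rewrite mulrDr mulr1 mulrC ltrDl.
Qed.

Lemma ecvg_sum_block u l i : (forall j, l j \is a fin_num) ->
  (forall j (d : R), 0 < d ->
    exists N, forall k, (N <= k)%N -> ((fine (l j) - d)%:E < u j k)%E) ->
  ecvg (fun k => \sum_j u j k)%E (\sum_j l j)%E -> ecvg (u i) (l i).
Proof.
move=> l_fin u_lower sum_cvg e e_gt0; set C : R := #|I|%:R.
have C_ge0 : 0 <= C by rewrite ler0n.
set d := e / (C + 1); have d_gt0 : 0 < d by rewrite divr_gt0 // ltr_wpDl.
have [N1 lowerN] := eventually_forall (fun j => u_lower j d d_gt0).
have [N2 sumN] := sum_cvg d d_gt0.
exists (maxn N1 N2) => k; rewrite geq_max => /andP[k1 k2].
have lsum_fin : (\sum_j l j)%E \is a fin_num by apply/sum_fin_numP => j _ _.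
have [sum_fin sum_close] := abse_lt_fin lsum_fin (sumN k k2).
have uk_fin j : u j k \is a fin_num.
  by move/sum_fin_numP: sum_fin; apply=> //; rewrite mem_index_enum.
rewrite -(sum_fine _ (fun j _ => uk_fin j)) -(sum_fine _ (fun j _ => l_fin j)) in sum_close.
have lower j : fine (l j) - d < fine (u j k).
  by have := lowerN k k1 j; rewrite -(fineK (uk_fin j)) lte_fin.
rewrite ltr_norml in sum_close; case/andP: sum_close => _ sum_lt.
have sum_lt' : \sum_j fine (u j k) < \sum_j fine (l j) + d by lra.
have upper := ltr_sum_block i (ltW d_gt0) lower sum_lt'.
have dC : d + C * d = e by rewrite /d; field; rewrite gt_eqF // ltr_wpDl.
rewrite -(fineK (uk_fin i)) -(fineK (l_fin i)) -EFinB /= lte_fin ltr_norml.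
have Cd_ge0 : 0 <= C * d by rewrite mulr_ge0 // ltW.
have lower_i := lower i; rewrite -/C in upper.
by apply/andP; split; lra.
Qed.

End ExtendedSequences.

Section LowerSemicontinuity.
Variables (R : realType) (I : finType) (h : (I -> R) -> \bar R).
Hypothesis h_lsc : lsc h.

Lemma lsc_gt x (d : R) : h x \is a fin_num -> 0 < d ->
  exists2 r : R, 0 < r & forall z, enorm (vsub z x) < r -> ((fine (h x) - d)%:E < h z)%E.
Proof.
move=> hx_fin d_gt0; apply: h_lsc.
by rewrite -[ltRHS](fineK hx_fin) lte_fin gtrBl.
Qed.

Lemma lsc_eventually_gt x xk (d : R) : h x \is a fin_num -> seq_cvg xk x -> 0 < d ->
  exists N, forall k, (N <= k)%N -> ((fine (h x) - d)%:E < h (xk k))%E.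
Proof.
move=> hx_fin xk_cvg d_gt0; have [r r_gt0 hr] := lsc_gt hx_fin d_gt0.
by have [N xkN] := xk_cvg r r_gt0; exists N => k /xkN; apply: hr.
Qed.

End LowerSemicontinuity.

Lemma lt_sume_split (R : realType) (I : finType) (a : I -> \bar R) (c : R) :
  (forall i, a i != -oo%E) -> (c%:E < \sum_i a i)%E ->
  exists2 cc : I -> R, (forall i, (cc i)%:E < a i)%E & c < \sum_i cc i.
Proof.
move=> a_proper c_lt; set C : R := #|I|%:R; have C_ge0 : 0 <= C by rewrite ler0n.
have [a_fin|] := boolP [forall i, a i \is a fin_num].
  have {}a_fin i : a i \is a fin_num by exact: (forallP a_fin i).
  rewrite -(EFin_sum_fine _ (fun i _ => a_fin i)) lte_fin in c_lt.
  set g := (\sum_i fine (a i) - c) / (C + 1).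
  have g_gt0 : 0 < g by rewrite divr_gt0 ?subr_gt0 // ltr_wpDl.
  exists (fun i => fine (a i) - g) => [i|].
    by rewrite -[ltRHS](fineK (a_fin i)) lte_fin gtrBl.
  rewrite sumrB sumr_const -mulr_natl -/C.
  have : C * g < \sum_i fine (a i) - c.
    by rewrite /g mulrA ltr_pdivrMr ?ltr_wpDl //; lra.
  lra.
rewrite negb_forall => /existsP[i0 ai0_inf].
have ai0 : a i0 = +oo%E by move: ai0_inf (a_proper i0); case: (a i0).
set K := `|c| + \sum_i `|fine (a i)| + C + 1.
set cc := fun i => if a i \is a fin_num then fine (a i) - 1 else K.
exists cc => [i|].
  rewrite /cc; case: ifP => [a_fin|]; first by rewrite -[ltRHS](fineK a_fin) lte_fin gtrBl.
  by move: (a_proper i); case: (a i) => // _ _; apply: ltry.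
have abs_sum_ge0 : 0 <= \sum_i `|fine (a i)| by apply: sumr_ge0.
have cc_lb i : - (`|fine (a i)| + 1) <= cc i.
  rewrite /cc; case: ifP => _; first by rewrite opprD lerD2r lerNl -normrN ler_norm.
  by rewrite /K; have := normr_ge0 c; have := normr_ge0 (fine (a i)); lra.
have others : - \sum_i (`|fine (a i)| + 1) <= \sum_(i | i != i0) cc i.
  apply: le_trans (_ : _ <= \sum_(i | i != i0) - (`|fine (a i)| + 1)) _.
    by rewrite sumrN lerN2 [leRHS](bigD1 i0) //= lerDr addr_ge0.
  by apply: ler_sum => i _; exact: cc_lb.
rewrite big_split /= sumr_const -mulr_natl -/C in others.
have cc_i0 : cc i0 = K by rewrite /cc ai0.
rewrite (bigD1 i0) //= cc_i0.
have : K = `|c| + \sum_i `|fine (a i)| + C + 1 by [].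
by have := ler_norm c; lra.
Qed.

Section Blocks.
Variables (R : realType) (m : nat) (n : 'I_m -> nat).
Local Notation T := {i : 'I_m & 'I_(n i)}.
Implicit Types (x y v : T -> R).

Definition blk x i : 'I_(n i) -> R := fun j => x (Tagged (fun i => 'I_(n i)) j).
Arguments blk x i : clear implicits.

Lemma ip_blk x y : ip x y = \sum_i ip (blk x i) (blk y i).
Proof.
rewrite /ip (@sig_big_dep _ 0 +%R _ (fun i => 'I_(n i)) xpredT (fun i => xpredT)
  (fun i j => blk x i j * blk y i j)) /=.
by apply: eq_bigr => -[i j].
Qed.

Lemma enorm_blk_le x i : enorm (blk x i) <= enorm x.
Proof.
rewrite /enorm ler_sqrt ?ip_ge0 // [leRHS]ip_blk (bigD1 i) //= lerDl.
by apply: sumr_ge0 => j _; apply: ip_ge0.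
Qed.

Lemma seq_cvg_blk (u : nat -> T -> R) l i :
  seq_cvg u l -> seq_cvg (fun k => blk (u k) i) (blk l i).
Proof.
move=> u_cvg e /u_cvg[N uN]; exists N => k /uN.
exact: le_lt_trans (enorm_blk_le _ i).
Qed.

Lemma seq_cvg_join (u : nat -> T -> R) l :
  (forall i, seq_cvg (fun k => blk (u k) i) (blk l i)) -> seq_cvg u l.
Proof.
move=> u_cvg e e_gt0; set C : R := #|{: T}|%:R.
have e'_gt0 : 0 < e / (C + 1) by rewrite divr_gt0 // ltr_wpDl ?ler0n.
have [N uN] := eventually_forall (fun i => u_cvg i _ e'_gt0).
exists N => k /uN u_near; apply: le_lt_trans (enorm_le_sum_abs _) _.
apply: le_lt_trans (_ : \sum_(p : T) (e / (C + 1)) < e).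
  apply: ler_sum => -[i j] _; apply: ltW.
  exact: (abs_lt_enorm j (u_near i)).
rewrite sumr_const -mulr_natl -/C mulrA ltr_pdivrMr ?ltr_wpDl ?ler0n //.
by rewrite mulrDr mulr1 mulrC ltrDl.
Qed.

Lemma blk_vsub x y i : blk (vsub x y) i = vsub (blk x i) (blk y i).
Proof. by []. Qed.

Lemma ip_blk1 (a w : T -> R) i : (forall j, j != i -> forall k, blk w j k = 0) ->
  ip a w = ip (blk a i) (blk w i).
Proof.
move=> w0; rewrite ip_blk (bigD1 i) //= big1 ?addr0 // => j /w0 wj0.
by rewrite /ip big1 // => k _; rewrite wj0 mulr0.
Qed.

Definition upd i (z : 'I_(n i) -> R) x : T -> R :=
  fun p => if tag p =P i is ReflectT e then z (etagged e) else x p.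
Arguments upd i z x : clear implicits.

Lemma blk_upd i z x : blk (upd i z x) i = z.
Proof.
apply: functional_extensionality => j; rewrite /blk /upd /=.
by case: eqP => // e; rewrite (eq_irrelevance e (erefl i)).
Qed.

Lemma blk_upd_neq i j z x : j != i -> blk (upd i z x) j = blk x j.
Proof.
move=> ji; apply: functional_extensionality => k; rewrite /blk /upd /=.
by case: eqP => // e; rewrite e eqxx in ji.
Qed.

Lemma blk_vsub_upd_neq i z x j : j != i -> forall k, blk (vsub (upd i z x) x) j k = 0.
Proof.
by move=> ji k; rewrite blk_vsub blk_upd_neq // /vsub subrr.
Qed.

Lemma ip_vsub_upd i z x a :
  ip a (vsub (upd i z x) x) = ip (blk a i) (vsub z (blk x i)).
Proof.
by rewrite (ip_blk1 _ (blk_vsub_upd_neq z x)) blk_vsub blk_upd.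
Qed.

Lemma enorm_vsub_upd i z x :
  enorm (vsub (upd i z x) x) = enorm (vsub z (blk x i)).
Proof.
by rewrite /enorm (ip_blk1 _ (blk_vsub_upd_neq z x)) blk_vsub blk_upd.
Qed.

Lemma ball_blocks (Q : forall i, ('I_(n i) -> R) -> Prop) c :
  (forall i, exists2 r : R, 0 < r &
     forall z, enorm (vsub z (blk c i)) < r -> Q i z) ->
  exists2 r : R, 0 < r & forall y, enorm (vsub y c) < r -> forall i, Q i (blk y i).
Proof.
move=> /fun_choice2[r r_gt0 r_spec]; have [d d_gt0 d_le] := pos_lower_bound r_gt0.
exists d => // y y_near i; apply: r_spec.
exact: le_lt_trans (enorm_blk_le (vsub y c) i) (lt_le_trans y_near (d_le i)).
Qed.

Lemma box_blocks
    (P : forall i, ('I_(n i) -> R) -> ('I_(n i) -> R) -> Prop) c e :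
  (forall i, exists2 r : R, 0 < r & forall z w,
     enorm (vsub z (blk c i)) < r -> enorm (vsub w (blk e i)) < r -> P i z w) ->
  exists2 s : R, 0 < s & forall x v, box c s x -> box e s v ->
    forall i, P i (blk x i) (blk v i).
Proof.
move=> /fun_choice2[r r_gt0 r_spec]; have [d d_gt0 d_le] := pos_lower_bound r_gt0.
set C : R := #|{: T}|%:R; have C_ge0 : 0 <= C by rewrite ler0n.
have C1_gt0 : 0 < C + 1 by rewrite ltr_wpDl.
have Cd_lt : C * (d / (C + 1)) < d.
  by rewrite mulrA ltr_pdivrMr // mulrDr mulr1 mulrC ltrDl.
have box_small c' x :
    box c' (d / (C + 1)) x -> forall i, enorm (vsub (blk x i) (blk c' i)) < r i.
  move=> /box_enorm x_near i; apply: le_lt_trans (enorm_blk_le (vsub x c') i) _.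
  exact: le_lt_trans x_near (lt_le_trans Cd_lt (d_le i)).
exists (d / (C + 1)) => [|x v x_near v_near i]; first by rewrite divr_gt0.
exact: r_spec (box_small _ _ x_near i) (box_small _ _ v_near i).
Qed.

End Blocks.

Arguments blk {R m n} x i.
Arguments upd {R m n} i z x.

Section SeparableSum.
Variables (R : realType) (m : nat) (n : 'I_m -> nat).
Variable F : forall i : 'I_m, ('I_(n i) -> R) -> \bar R.
Arguments F : clear implicits.
Local Notation T := {i : 'I_m & 'I_(n i)}.
Implicit Types (x v : T -> R).

Lemma sep_sumE x : sep_sum F x = (\sum_i F i (blk x i))%E.
Proof. by []. Qed.

Lemma sep_sum_upd i z x :
  sep_sum F (upd i z x) = (F i z + \sum_(j | j != i) F j (blk x j))%E.
Proof.
rewrite sep_sumE (bigD1 i) //= blk_upd; congr (_ + _)%E.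
by apply: eq_bigr => j ji; rewrite blk_upd_neq.
Qed.

Lemma sep_sum_fine x : (forall i, F i (blk x i) \is a fin_num) ->
  sep_sum F x = (\sum_i fine (F i (blk x i)))%:E.
Proof. by move=> Fx_fin; rewrite sep_sumE EFin_sum_fine. Qed.

Lemma sep_sum_fin_blk x : sep_sum F x \is a fin_num ->
  forall i, F i (blk x i) \is a fin_num.
Proof. by move=> /sum_fin_numP Fx_fin i; apply: Fx_fin; rewrite ?mem_index_enum. Qed.

Lemma reg_subdiff_sep_sumE x v :
  reg_subdiff (sep_sum F) x v <-> forall i, reg_subdiff (F i) (blk x i) (blk v i).
Proof.
split=> [[Sx_fin S_reg] i | F_reg].
  have Fx_fin := sep_sum_fin_blk Sx_fin.
  have rest_fin : (\sum_(j | j != i) F j (blk x j))%E \is a fin_num.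
    by apply/sum_fin_numP => j _ _; exact: Fx_fin.
  split=> // eps /S_reg[d d_gt0 S_d]; exists d => // z z_near.
  have := S_d (upd i z x); rewrite enorm_vsub_upd => /(_ z_near).
  by rewrite ip_vsub_upd sep_sum_upd sep_sumE (bigD1 i) //= addeAC leeD2rE.
have Fx_fin i : F i (blk x i) \is a fin_num by case: (F_reg i).
split=> [|eps eps_gt0]; first by rewrite sep_sum_fine.
set M : R := m%:R; have M_ge0 : 0 <= M by rewrite ler0n.
set eps' := eps / (M + 1); have eps'_gt0 : 0 < eps' by rewrite divr_gt0 // ltr_wpDl.
have [d d_gt0 d_spec] := ball_blocks (fun i => (F_reg i).2 _ eps'_gt0).
exists d => // y /d_spec y_near.
have blocks : (\sum_i (F i (blk x i) + (ip (blk v i) (vsub (blk y i) (blk x i))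
    - eps' * enorm (vsub (blk y i) (blk x i)))%:E) <= sep_sum F y)%E.
  by apply: lee_sum => i _; exact: y_near i.
apply: le_trans blocks.
rewrite big_split /= sumEFin -sep_sumE leeD2l ?sep_sum_fine // lee_fin.
rewrite sumrB ip_blk lerD2l lerN2 -mulr_sumr.
have blk_sum : \sum_i enorm (vsub (blk y i) (blk x i)) <= M * enorm (vsub y x).
  have -> : M * enorm (vsub y x) = \sum_(i < m) enorm (vsub y x).
    by rewrite sumr_const card_ord mulr_natl.
  by apply: ler_sum => i _; exact: enorm_blk_le (vsub y x) i.
apply: le_trans (ler_wpM2l (ltW eps'_gt0) blk_sum) _.
rewrite mulrA ler_wpM2r ?sqrtr_ge0 // /eps' mulrAC ler_pdivrMr ?ltr_wpDl //.
by rewrite ler_pM2l // lerDl.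
Qed.

Lemma lim_subdiff_sep_sum x v :
  (forall i, lim_subdiff (F i) (blk x i) (blk v i)) -> lim_subdiff (sep_sum F) x v.
Proof.
move=> F_lim; have Fx_fin i : F i (blk x i) \is a fin_num by case: (F_lim i).
split; first by rewrite sep_sum_fine.
have [xk /fun_choice[vk seq_spec]] := fun_choice (fun i => (F_lim i).2).
exists (fun k => sep_join (fun i => xk i k)), (fun k => sep_join (fun i => vk i k)).
split.
- by apply: seq_cvg_join => i; case: (seq_spec i).
- apply: (@ecvg_sum _ _ (fun i k => F i (xk i k)) (fun i => F i (blk x i))) => // i.
  by case: (seq_spec i).
- by move=> k; apply/reg_subdiff_sep_sumE => i; case: (seq_spec i) => _ _ /(_ k).
- by apply: seq_cvg_join => i; case: (seq_spec i).
Qed.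

Lemma lim_subdiff_blk x v i : (forall j, lsc (F j)) ->
  lim_subdiff (sep_sum F) x v -> lim_subdiff (F i) (blk x i) (blk v i).
Proof.
move=> F_lsc [Sx_fin [xk [vk [xk_cvg Sxk_cvg S_reg vk_cvg]]]].
have Fx_fin := sep_sum_fin_blk Sx_fin.
split=> //; exists (fun k => blk (xk k) i), (fun k => blk (vk k) i); split.
- exact: seq_cvg_blk.
- apply: (ecvg_sum_block (u := fun j k => F j (blk (xk k) j)) i Fx_fin _ Sxk_cvg).
  move=> j d d_gt0 /=.
  exact (lsc_eventually_gt (F_lsc j) (Fx_fin j) (seq_cvg_blk j xk_cvg) d_gt0).
- by move=> k; move/reg_subdiff_sep_sumE: (S_reg k).
- exact: seq_cvg_blk.
Qed.

Hypothesis F_proper : forall i, proper_valued (F i).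

Lemma sep_sum_proper : proper_valued (sep_sum F).
Proof.
move=> x; rewrite sep_sumE; elim/big_ind: _ => // [a b|i _]; last exact: F_proper.
by rewrite adde_eq_ninfty negb_or => -> ->.
Qed.

Lemma sep_sum_convex : (forall i, convex_fun (F i)) -> convex_fun (sep_sum F).
Proof.
move=> F_convex x y t t01; rewrite !sep_sumE.
have blocks : (\sum_i F i (blk (vcomb t x y) i) <=
    \sum_i (t%:E * F i (blk x i) + (1 - t)%:E * F i (blk y i)))%E.
  by apply: lee_sum => i _; exact: F_convex.
apply: le_trans blocks _.
have adde_def (a b : \bar R) : a != -oo%E -> b != -oo%E -> (a +? b)%E.
  by case: a => [a| |] //; case: b.
by rewrite big_split /= !fin_num_sume_distrr // => i j _ _; apply: adde_def; exact: F_proper.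
Qed.

Lemma sep_sum_lsc : (forall i, lsc (F i)) -> lsc (sep_sum F).
Proof.
move=> F_lsc x c c_lt.
have [cc cc_lt c_lt_sum] := lt_sume_split (fun i => @F_proper i (blk x i)) c_lt.
have [r r_gt0 r_spec] := ball_blocks (fun i => F_lsc i (blk x i) (cc i) (cc_lt i)).
exists r => // y /r_spec y_near; rewrite sep_sumE.
apply: lt_le_trans (_ : (\sum_i (cc i)%:E <= _)%E); first by rewrite sumEFin lte_fin.
by apply: lee_sum => i _; apply: ltW.
Qed.

End SeparableSum.

Section SeparableLocalization.
Local Unset Implicit Arguments.
Variables (R : realType) (m : nat) (n : 'I_m -> nat).
Variables (f phi : forall i : 'I_m, ('I_(n i) -> R) -> \bar R).
Variables (xb vb : forall i : 'I_m, 'I_(n i) -> R).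
Variables (U V : forall i : 'I_m, ('I_(n i) -> R) -> Prop) (eps : 'I_m -> R).
Local Notation T := {i : 'I_m & 'I_(n i)}.
Implicit Types (x v : T -> R).

Hypotheses (f_proper : forall i, proper_valued (f i)) (f_lsc : forall i, lsc (f i)).
Hypothesis vb_subgrad : forall i, lim_subdiff (f i) (xb i) (vb i).
Hypothesis eps_gt0 : forall i, 0 < eps i.
Hypothesis UV_nbhd : forall i, convex_set (U i) /\ is_nbhd (U i) (xb i) /\
  convex_set (V i) /\ is_nbhd (V i) (vb i).
Hypothesis phi_convex : forall i,
  proper_valued (phi i) /\ lsc (phi i) /\ convex_fun (phi i).
Hypothesis phi_le : forall i z, U i z -> (phi i z <= f i z)%E.
Hypothesis gph_eq : forall i z w,
  (U i z /\ (f i z < f i (xb i) + (eps i)%:E)%E) /\ V i w /\ lim_subdiff (f i) z w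
  <-> U i z /\ V i w /\ lim_subdiff (phi i) z w.
Hypothesis f_eq_phi : forall i z w, U i z -> (f i z < f i (xb i) + (eps i)%:E)%E ->
  V i w -> lim_subdiff (f i) z w -> f i z = phi i z.

Let fxb_fin i : f i (xb i) \is a fin_num := (vb_subgrad i).1.

Lemma phi_xb i : phi i (xb i) = f i (xb i).
Proof.
have [_ [U_nbhd [_ V_nbhd]]] := UV_nbhd i.
apply/esym/f_eq_phi; [exact: nbhd_center U_nbhd | | exact: nbhd_center V_nbhd |].
  by rewrite lteDl // lte_fin.
exact: vb_subgrad.
Qed.

Lemma sep_sum_xb : sep_sum f (sep_join xb) = (\sum_i fine (f i (xb i)))%:E.
Proof. exact: (sep_sum_fine (x := sep_join xb) fxb_fin). Qed.

Definition near_xvb i (d : R) (z w : 'I_(n i) -> R) : Prop :=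
  [/\ U i z, V i w, ((fine (f i (xb i)) - d)%:E < f i z)%E &
      lim_subdiff (phi i) z w -> (phi i z < f i (xb i) + d%:E)%E].

Lemma box_near_xvb (d : R) : 0 < d -> exists2 s : R, 0 < s & forall x v,
  box (sep_join xb) s x -> box (sep_join vb) s v ->
  forall i, near_xvb i d (blk x i) (blk v i).
Proof.
move=> d_gt0; apply: (box_blocks (P := fun i => near_xvb i d)) => i.
have [_ [[rU rU_gt0 rU_spec] [_ [rV rV_gt0 rV_spec]]]] := UV_nbhd i.
have [phi_proper [_ phi_cvx]] := phi_convex i.
have [rL rL_gt0 rL_spec] := lsc_gt (f_lsc i) (fxb_fin i) d_gt0.
have phixb_fin : phi i (xb i) \is a fin_num by rewrite phi_xb.
have [rC rC_gt0 rC_spec] := convex_lim_subdiff_lt phi_proper phi_cvx (vb i) phixb_fin d_gt0.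
exists (Num.min (Num.min rU rV) (Num.min rL rC)) => [|z w].
  by rewrite !lt_min rU_gt0 rV_gt0 rL_gt0.
rewrite !lt_min => /andP[/andP[zU _] /andP[zL zC]] /andP[/andP[_ wV] /andP[_ wC]].
split; [exact: rU_spec | exact: rV_spec | exact: rL_spec |].
by move/(rC_spec z w zC wC); rewrite phi_xb.
Qed.

Let phi_lsc i : lsc (phi i) := (phi_convex i).2.1.

(* Each block value lies above [f_i xb_i - d], so [f x < f xb + c] forces
   [f_i x_i < f_i xb_i + c + m d <= eps_i]; conversely [phi_i x_i < f_i xb_i + d]
   in every block gives [f x < f xb + m d < f xb + c]. *)
Section Level.
Variables (d c s : R).
Hypotheses (d_gt0 : 0 < d) (md_lt_c : m%:R * d < c).
Hypothesis level_le_eps : forall i, c + m%:R * d <= eps i.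
Hypothesis near : forall x v, box (sep_join xb) s x -> box (sep_join vb) s v ->
  forall i, near_xvb i d (blk x i) (blk v i).

Lemma level_blk x v : box (sep_join xb) s x -> box (sep_join vb) s v ->
  (sep_sum f x < sep_sum f (sep_join xb) + c%:E)%E -> lim_subdiff (sep_sum f) x v ->
  forall i, (f i (blk x i) < f i (xb i) + (eps i)%:E)%E.
Proof.
move=> x_near v_near level f_xv i.
have fx_fin j : f j (blk x j) \is a fin_num := (lim_subdiff_blk j f_lsc f_xv).1.
rewrite (sep_sum_fine fx_fin) sep_sum_xb -EFinD lte_fin in level.
have lower j : fine (f j (xb j)) - d < fine (f j (blk x j)).
  by have [_ _ + _] := near x v x_near v_near j; rewrite -(fineK (fx_fin j)) lte_fin.
have := ltr_sum_block i (ltW d_gt0) lower level; rewrite card_ord.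
rewrite -(fineK (fx_fin i)) -(fineK (fxb_fin i)) -EFinD lte_fin.
by have := level_le_eps i; lra.
Qed.

Lemma level_of_blk x v : box (sep_join xb) s x -> box (sep_join vb) s v ->
  (forall i, lim_subdiff (phi i) (blk x i) (blk v i) /\ f i (blk x i) = phi i (blk x i)) ->
  (sep_sum f x < sep_sum f (sep_join xb) + c%:E)%E.
Proof.
move=> x_near v_near phi_blk.
have fx_fin i : f i (blk x i) \is a fin_num.
  by have [[phix_fin _] ->] := phi_blk i.
have upper i : fine (f i (blk x i)) <= fine (f i (xb i)) + d.
  have [_ _ _ phi_lt] := near x v x_near v_near i; have [phi_xv f_phi] := phi_blk i.
  have := phi_lt phi_xv; rewrite -f_phi.
  by rewrite -(fineK (fx_fin i)) -(fineK (fxb_fin i)) -EFinD lte_fin /= => /ltW.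
rewrite (sep_sum_fine fx_fin) sep_sum_xb -EFinD lte_fin.
have sum_le : \sum_i fine (f i (blk x i)) <= \sum_i (fine (f i (xb i)) + d).
  by apply: ler_sum => i _; exact: upper.
apply: le_lt_trans sum_le _.
by rewrite big_split /= sumr_const card_ord -mulr_natl ltrD2l.
Qed.

Lemma sep_sum_eq_phi x v : box (sep_join xb) s x -> box (sep_join vb) s v ->
  (sep_sum f x < sep_sum f (sep_join xb) + c%:E)%E -> lim_subdiff (sep_sum f) x v ->
  sep_sum f x = sep_sum phi x.
Proof.
move=> x_near v_near level f_xv; rewrite !sep_sumE; apply: eq_bigr => i _.
have [xU vV _ _] := near x v x_near v_near i.
apply: f_eq_phi xU (level_blk x v x_near v_near level f_xv i) vV _.
exact: lim_subdiff_blk i f_lsc f_xv.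
Qed.

Lemma lim_subdiff_phi_of_f x v : box (sep_join xb) s x -> box (sep_join vb) s v ->
  (sep_sum f x < sep_sum f (sep_join xb) + c%:E)%E -> lim_subdiff (sep_sum f) x v ->
  lim_subdiff (sep_sum phi) x v.
Proof.
move=> x_near v_near level f_xv; apply: lim_subdiff_sep_sum => i.
have [xU vV _ _] := near x v x_near v_near i.
have f_blk := conj (conj xU (level_blk x v x_near v_near level f_xv i))
  (conj vV (lim_subdiff_blk i f_lsc f_xv)).
by case: ((gph_eq i _ _).1 f_blk) => _ [].
Qed.

Lemma lim_subdiff_f_of_phi x v : box (sep_join xb) s x -> box (sep_join vb) s v ->
  lim_subdiff (sep_sum phi) x v ->
  (sep_sum f x < sep_sum f (sep_join xb) + c%:E)%E /\ lim_subdiff (sep_sum f) x v.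
Proof.
move=> x_near v_near phi_xv.
have phi_blk i := lim_subdiff_blk i phi_lsc phi_xv.
have f_blk i : [/\ U i (blk x i), V i (blk v i),
    (f i (blk x i) < f i (xb i) + (eps i)%:E)%E & lim_subdiff (f i) (blk x i) (blk v i)].
  have [xU vV _ _] := near x v x_near v_near i.
  by case: ((gph_eq i _ _).2 (conj xU (conj vV (phi_blk i)))) => -[_ ?] [_ ?].
split; last by apply: lim_subdiff_sep_sum => i; case: (f_blk i).
apply: (level_of_blk x v x_near v_near) => i; split; first exact: phi_blk.
by case: (f_blk i) => xU vV lt lim; exact: f_eq_phi xU lt vV lim.
Qed.

End Level.

Theorem sep_sum_var_convex : var_convex (sep_sum f) (sep_join xb) (sep_join vb).
Proof.
have phi_proper i := (phi_convex i).1; have phi_cvx i := (phi_convex i).2.2.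
split; first exact: sep_sum_lsc.
split; first exact: lim_subdiff_sep_sum.
have [eta eta_gt0 eta_le] := pos_lower_bound eps_gt0.
set M : R := m%:R; have M_ge0 : 0 <= M by rewrite ler0n.
set d := eta / (2 * (M + 1)); set c := eta / 2.
have d_gt0 : 0 < d by rewrite divr_gt0 // mulr_gt0 // ltr_wpDl.
have Md_lt_c : M * d < c.
  rewrite /d /c mulrA ltr_pdivrMr ?mulr_gt0 ?ltr_wpDl //.
  have -> : eta / 2 * (2 * (M + 1)) = eta * M + eta by field.
  lra.
have c_Md_le i : c + M * d <= eps i.
  have cc_eq : c + c = eta by rewrite /c; field.
  by have := eta_le i; lra.
have [s s_gt0 near] := box_near_xvb d d_gt0.
exists (box (sep_join xb) s), (box (sep_join vb) s), (sep_sum phi), c.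
  by rewrite divr_gt0.
split.
- by split; [exact: box_convex | split; [exact: box_nbhd | split;
    [exact: box_convex | exact: box_nbhd]]].
- split; first exact: sep_sum_proper.
  by split; [exact: sep_sum_lsc | exact: sep_sum_convex].
- move=> x x_near; rewrite !sep_sumE; apply: lee_sum => i _; apply: phi_le.
  by have [] := near x (sep_join vb) x_near (box_center _ s_gt0) i.
- move=> x v; split=> [[[x_near level] [v_near f_xv]] | [x_near [v_near phi_xv]]].
    do 2 split => //.
    exact: lim_subdiff_phi_of_f _ _ _ d_gt0 c_Md_le near x v x_near v_near level f_xv.
  by have [] := lim_subdiff_f_of_phi _ _ _ Md_lt_c near x v x_near v_near phi_xv.
- move=> x v x_near level v_near.
  exact: sep_sum_eq_phi _ _ _ d_gt0 c_Md_le near x v x_near v_near level.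
Qed.

End SeparableLocalization.

Theorem mainTheorem18 (R : realType) (m : nat) (n : 'I_m -> nat)
  (f : forall i : 'I_m, ('I_(n i) -> R) -> \bar R)
  (xb vb : forall i : 'I_m, 'I_(n i) -> R) :
  (forall i, proper_valued (f i)) ->
  (forall i, lsc (f i)) ->
  (forall i, var_convex (f i) (xb i) (vb i)) ->
  var_convex (sep_sum f) (sep_join xb) (sep_join vb).
Proof.
move=> f_proper f_lsc f_vc.
have [U /fun_choice[V /fun_choice[phi /fun_choice2[eps eps_gt0 loc]]]] :=
  fun_choice (fun i => (f_vc i).2.2).
have [UV_nbhd phi_convex phi_le gph_eq f_eq_phi] := all_and5 loc.
have vb_subgrad i : lim_subdiff (f i) (xb i) (vb i) by case: (f_vc i) => _ [].
by apply: sep_sum_var_convex.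
Qed.
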